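(* Let $M$ be a complete pointed metric space and $Y$ a strictly convex real Banach space with the Kadec–Klee property. Then for every $f\in\mathrm{Lip}_0(M,Y)$: $f\in\mathrm{A}(M,Y)$ if and only if $T_f\in\mathrm{QNA}(\mathcal{F}(M),Y)$.
   Context: Throughout, metric spaces are complete and pointed, with base point $0$. $\mathrm{Lip}_0(M,Y)$ is the Banach space of Lipschitz maps $f:M\to Y$ with $f(0)=0$, normed by $\|f\|=\sup_{p\neq q}\|f(p)-f(q)\|/d(p,q)$. A map $f$ attains its norm toward $y\in Y$ if there is a sequence $(p_n,q_n)$ in $M\times M$ with $p_n\neq q_n$ such that $[f(p_n)-f(q_n)]/d(p_n,q_n)\to y$ and $\|y\|=\|f\|$; $\mathrm{A}(M,Y)$ is the set of $f$ attaining their norm toward some vector. $\mathcal{F}(M)$ is the closed linear span of the evaluations $\delta(x)$ in $\mathrm{Lip}_0(M,\mathbb{R})^*$, and $T_f\in\mathcal{L}(\mathcal{F}(M),Y)$ is the unique operator with $T_f(\delta(x))=f(x)$. For Banach spaces $X,Y$, $T\in\mathcal{L}(X,Y)$ belongs to $\mathrm{QNA}(X,Y)$ if there exist $(x_n)\subset B_X$ and $y_0\in Y$ with $Tx_n\to y_0$ and $\|y_0\|=\|T\|$. The Kadec–Klee property here means that the weak topology and the norm topology coincide on the unit sphere $S_Y$. *)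

From HB Require Import structures.
From mathcomp Require Import all_boot all_order all_algebra.
From mathcomp Require Import all_classical all_reals all_analysis.
Set Implicit Arguments. Unset Strict Implicit. Unset Printing Implicit Defensive.
Import Order.TTheory GRing.Theory Num.Theory.
Import numFieldNormedType.Exports.
Local Open Scope classical_set_scope.
Local Open Scope ring_scope.

Section Defs.
Variable R : realType.

Definition is_metric (M : Type) (d : M -> M -> R) : Prop :=
  (forall x y, 0 <= d x y) /\
  (forall x y, d x y = 0 <-> x = y) /\
  (forall x y, d x y = d y x) /\
  (forall x y z, d x z <= d x y + d y z).

Definition complete_metric (M : Type) (d : M -> M -> R) : Prop :=
  forall u : nat -> M,
    (forall e : R, 0 < e -> exists N : nat, forall m n : nat,
        (N <= m)%N -> (N <= n)%N -> d (u m) (u n) < e) ->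
    exists x : M, forall e : R, 0 < e -> exists N : nat, forall n : nat,
        (N <= n)%N -> d (u n) x < e.

Definition Lip0 (M : Type) (d : M -> M -> R) (x0 : M)
    (Y : normedModType R) (f : M -> Y) : Prop :=
  f x0 = 0 /\ exists C : R, forall p q, `|f p - f q| <= C * d p q.

Definition lipnorm (M : Type) (d : M -> M -> R) (Y : normedModType R)
    (f : M -> Y) : R :=
  sup [set r : R | exists p q : M, p <> q /\ r = `|f p - f q| / d p q].

Definition attains_norm_toward (M : Type) (d : M -> M -> R)
    (Y : normedModType R) (f : M -> Y) (y : Y) : Prop :=
  exists p q : nat -> M, (forall n, p n <> q n) /\
    ((fun n => (d (p n) (q n))^-1 *: (f (p n) - f (q n))) @ \oo --> y) /\
    `|y| = lipnorm d f.

Definition in_A (M : Type) (d : M -> M -> R) (Y : normedModType R)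
    (f : M -> Y) : Prop :=
  exists y : Y, attains_norm_toward d f y.

Definition lip_ball (M : Type) (d : M -> M -> R) (x0 : M) (g : M -> R) : Prop :=
  g x0 = 0 /\ forall p q, `|g p - g q| <= d p q.

Definition Lip0R (M : Type) (d : M -> M -> R) (x0 : M) (g : M -> R) : Prop :=
  g x0 = 0 /\ exists C : R, forall p q, `|g p - g q| <= C * d p q.

(* finite linear combination  sum_i a_i delta(x_i)  acting on Lip0(M,R) *)
Definition mol (M : Type) (s : seq (R * M)) (g : M -> R) : R :=
  \sum_(c <- s) c.1 * g c.2.

(* its image  sum_i a_i f(x_i)  under T_f *)
Definition molY (M : Type) (Y : normedModType R) (f : M -> Y)
    (s : seq (R * M)) : Y :=
  \sum_(c <- s) c.1 *: f c.2.

(* phi is an element of Lip0(M,R)^* (linear on Lip0(M,R); boundedness follows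
   from the approximation below) lying in the norm closure of span delta(M),
   i.e. phi \in F(M). *)
Definition in_free (M : Type) (d : M -> M -> R) (x0 : M)
    (phi : (M -> R) -> R) : Prop :=
  (forall (a : R) (g h : M -> R), Lip0R d x0 g -> Lip0R d x0 h ->
      phi (fun x => a * g x + h x) = a * phi g + phi h) /\
  (forall e : R, 0 < e -> exists s : seq (R * M),
      forall g, lip_ball d x0 g -> `|phi g - mol s g| <= e).

Definition free_ball (M : Type) (d : M -> M -> R) (x0 : M)
    (phi : (M -> R) -> R) : Prop :=
  forall g, lip_ball d x0 g -> `|phi g| <= 1.

(* T_f phi = y : T_f is the continuous extension of delta(x) |-> f(x);
   y is the limit of T_f(mu_n) for finitely supported mu_n -> phi in norm. *)
Definition Tf_val (M : Type) (d : M -> M -> R) (x0 : M)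
    (Y : normedModType R) (f : M -> Y) (phi : (M -> R) -> R) (y : Y) : Prop :=
  exists s : nat -> seq (R * M),
    (forall n : nat, forall g, lip_ball d x0 g ->
        `|phi g - mol (s n) g| <= n.+1%:R^-1) /\
    ((fun n => molY f (s n)) @ \oo --> y).

Definition Tf_norm (M : Type) (d : M -> M -> R) (x0 : M)
    (Y : normedModType R) (f : M -> Y) : R :=
  sup [set r : R | exists (phi : (M -> R) -> R) (y : Y),
        in_free d x0 phi /\ free_ball d x0 phi /\ Tf_val d x0 f phi y /\
        r = `|y|].

Definition Tf_QNA (M : Type) (d : M -> M -> R) (x0 : M)
    (Y : normedModType R) (f : M -> Y) : Prop :=
  exists (phi : nat -> (M -> R) -> R) (yn : nat -> Y) (y0 : Y),
    (forall n, in_free d x0 (phi n) /\ free_ball d x0 (phi n) /\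
               Tf_val d x0 f (phi n) (yn n)) /\
    (yn @ \oo --> y0) /\
    `|y0| = Tf_norm d x0 f.

Definition strictly_convex (Y : normedModType R) : Prop :=
  forall x y : Y, `|x| = 1 -> `|y| = 1 -> x <> y -> `|2^-1 *: (x + y)| < 1.

Definition is_dual_elt (Y : normedModType R) (l : Y -> R) : Prop :=
  (forall (a : R) (x y : Y), l (a *: x + y) = a * l x + l y) /\ continuous l.

(* weak and norm topologies coincide on S_Y: at each point of S_Y, every
   relative norm-neighbourhood contains a relative weak-neighbourhood and
   conversely (basic neighbourhoods written out). *)
Definition kadec_klee (Y : normedModType R) : Prop :=
  forall y : Y, `|y| = 1 ->
   (forall e : R, 0 < e -> exists (k : nat) (l : nat -> Y -> R) (del : R),
      (forall i, is_dual_elt (l i)) /\ 0 < del /\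
      forall z : Y, `|z| = 1 ->
        (forall i, (i < k)%N -> `|l i z - l i y| < del) -> `|z - y| < e) /\
   (forall (k : nat) (l : nat -> Y -> R) (del : R),
      (forall i, is_dual_elt (l i)) -> 0 < del ->
      exists e : R, 0 < e /\ forall z : Y, `|z| = 1 -> `|z - y| < e ->
        forall i, (i < k)%N -> `|l i z - l i y| < del).

End Defs.

From HB Require Import structures.
From mathcomp Require Import all_boot all_order all_algebra.
From mathcomp Require Import all_classical all_reals all_analysis.
From mathcomp Require Import ring lra.
Set Implicit Arguments. Unset Strict Implicit. Unset Printing Implicit Defensive.
Import Order.TTheory GRing.Theory Num.Theory.
Import numFieldNormedType.Exports.
Local Open Scope classical_set_scope.
Local Open Scope ring_scope.

(* The molecule of [(p, q)] is sent by [T_f] to the slope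
   [(f p - f q) / d p q], and [||T_f|| = ||f||]; so [f \in A(M, Y)] gives
   [T_f \in QNA].  Conversely, let [T_f phi_n --> y0] with [phi_n] in the unit
   ball and [||y0|| = ||f|| = L > 0].  Testing the [phi_n] against the Lipschitz
   functions [psi \o f] shows that every functional at most [1] on the set [S]
   of slopes divided by [L] is at most [1] at [y0 / L]: this point of the unit
   sphere lies in the closed convex hull of [S], a subset of the unit ball.
   In a strictly convex Kadec-Klee space such a point is in the closure of
   [S], which gives the pairs [(p_n, q_n)].

   For that last step, suppose [S] stays away from [y0 / L]; then Kadec-Klee
   covers [S] by finitely many closed half-spaces missing [y0 / L].  Take
   nonnegative combinations of points of [S] of total weight tending to [1]
   that converge to [y0 / L] and follow them along an ultrafilter: one
   half-space carries a fixed fraction [w] of the weight, and Kadec-Klee,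
   applied to that part at one index plus the rest at another, shows that
   these parts converge in norm to some [P] with [||P|| <= w] and
   [||y0 / L - P|| <= 1 - w].  Strict convexity forces [P = w y0 / L],
   contradicting that [P] lies in the half-space. *)
Section LinearForms.
Variables (R : realType) (V : lmodType R).

Definition linear_form (psi : V -> R) :=
  forall (a : R) x y, psi (a *: x + y) = a * psi x + psi y.

Variable psi : V -> R.
Hypothesis psi_lin : linear_form psi.

Lemma linear_form0 : psi 0 = 0.
Proof. by have := psi_lin 1 0 0; rewrite scale1r addr0 mul1r; lra. Qed.

Lemma linear_formD x y : psi (x + y) = psi x + psi y.
Proof. by have := psi_lin 1 x y; rewrite scale1r mul1r. Qed.

Lemma linear_formZ a x : psi (a *: x) = a * psi x.
Proof. by have := psi_lin a x 0; rewrite !addr0 linear_form0 addr0. Qed.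

Lemma linear_formN x : psi (- x) = - psi x.
Proof. by rewrite -scaleN1r linear_formZ mulN1r. Qed.

Lemma linear_formB x y : psi (x - y) = psi x - psi y.
Proof. by rewrite linear_formD linear_formN. Qed.

Lemma linear_form_sum (I : Type) (r : seq I) (F : I -> V) :
  psi (\sum_(i <- r) F i) = \sum_(i <- r) psi (F i).
Proof.
elim: r => [|i r IH]; first by rewrite !big_nil linear_form0.
by rewrite !big_cons linear_formD IH.
Qed.

End LinearForms.

Section HahnBanach.
Variables (R : realType) (V : lmodType R) (p : V -> R).
Hypothesis p_subadd : forall x y, p (x + y) <= p x + p y.
Hypothesis p_homo : forall (t : R) x, 0 < t -> p (t *: x) = t * p x.

Lemma sublinear0 : p 0 = 0.
Proof. by have := p_homo 0 (ltr0n R 2); rewrite scaler0; lra. Qed.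

Lemma sublinearN x : - p x <= p (- x).
Proof. by have := p_subadd x (- x); rewrite subrr sublinear0; lra. Qed.

Variable z0 : V.

(* Partial linear functionals dominated by [p] are handled through their
   graphs, so that Zorn's lemma applies to sets of pairs. *)
Definition dominated_graph (G : set (V * R)) :=
  [/\ (forall v a b, G (v, a) -> G (v, b) -> a = b),
      (forall (t : R) u a v b, G (u, a) -> G (v, b) -> G (t *: u + v, t * a + b)),
      (forall v a, G (v, a) -> a <= p v) &
      G (z0, p z0)].

Lemma dominated_graph0 G : dominated_graph G -> G (0, 0).
Proof.
case=> _ lin _ Gz0.
by have := lin (-1) _ _ _ _ Gz0 Gz0; rewrite scaleN1r addNr mulN1r addNr.
Qed.

Lemma dominated_graphZ G t u a :
  dominated_graph G -> G (u, a) -> G (t *: u, t * a).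
Proof.
move=> gG Gu; have [_ lin _ _] := gG.
by have := lin t _ _ _ _ Gu (dominated_graph0 gG); rewrite !addr0.
Qed.

Definition empty_or_dominated_graph G := G = set0 \/ dominated_graph G.

Lemma bigcup_dominated_graph (F : set (set (V * R))) :
  F `<=` empty_or_dominated_graph -> total_on F subset ->
  empty_or_dominated_graph (\bigcup_(X in F) X).
Proof.
move=> FP Ftot.
have graphF G z : F G -> G z -> dominated_graph G by move=> /FP[->|//].
have [[G0 [x [FG0 G0x]]]|Fempty] :=
  pselect (exists G, exists x, F G /\ G x); last first.
  by left; apply/seteqP; split => // x [G FG Gx]; apply: Fempty; exists G, x.
right.
have common a b : (\bigcup_(X in F) X) a -> (\bigcup_(X in F) X) b ->
    exists G, [/\ F G, dominated_graph G, G a & G b].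
  move=> [G1 FG1 G1a] [G2 FG2 G2b].
  have [G12|G21] := Ftot _ _ FG1 FG2.
  - by exists G2; split => //; [exact: graphF G2b | exact: G12].
  - by exists G1; split => //; [exact: graphF G1a | exact: G21].
split.
- by move=> v a b /common h /h [G [_ [fun_G _ _ _] Ga Gb]]; exact: fun_G Ga Gb.
- move=> t u a v b /common h /h [G [FG [_ lin _ _] Ga Gb]].
  by exists G => //; exact: lin.
- by move=> v a [G FG Ga]; have [_ _ dom _] := graphF _ _ FG Ga; exact: dom.
- by exists G0 => //; have [] := graphF _ _ FG0 G0x.
Qed.

Lemma dominated_line_graph :
  dominated_graph [set (t *: z0, t * p z0) | t in [set: R]].
Proof.
split.
- move=> v a b [t _ [<- <-]] [s _ [e <-]].
  have : (t - s) *: z0 = 0 by rewrite scalerBl e subrr.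
  move/eqP; rewrite scaler_eq0 => /orP[/eqP ts|/eqP ->].
    by have -> : t = s by lra.
  by rewrite sublinear0 !mulr0.
- move=> t u a v b [t1 _ [<- <-]] [t2 _ [<- <-]]; exists (t * t1 + t2) => //.
  by rewrite scalerDl scalerA mulrDl mulrA.
- move=> v a [t _ [<- <-]].
  have [tgt0|tle0] := ltrP 0 t; first by rewrite p_homo.
  have [->|tlt0] := eqVneq t 0; first by rewrite scale0r sublinear0 mul0r.
  have tN : 0 < - t by rewrite oppr_gt0 lt_neqAle tlt0 tle0.
  have := p_homo (- z0) tN; rewrite scaleNr scalerN opprK => ->.
  by have := sublinearN z0; nra.
- by exists 1 => //; rewrite scale1r mul1r.
Qed.

Section OneStepExtension.
Variable G : set (V * R).
Hypothesis gG : dominated_graph G.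
Variable w : V.
Hypothesis w_out : forall a, ~ G (w, a).

(* [w] gets the value [c], which must lie between [a - p (u - w)] and
   [p (v + w) - b] for all [(u, a)] and [(v, b)] in [G]. *)
Let lower := [set r | exists u a, G (u, a) /\ r = a - p (u - w)].

Let upper_bound_lower v b : G (v, b) -> ubound lower (p (v + w) - b).
Proof.
move=> Gv _ [u [a [Gu ->]]].
have [_ lin dom _] := gG.
have := dom _ _ (lin 1 _ _ _ _ Gu Gv); rewrite scale1r mul1r.
have := p_subadd (u - w) (v + w).
by rewrite addrACA addNr addr0; lra.
Qed.

Let lower_has_sup : has_sup lower.
Proof.
have G0 := dominated_graph0 gG.
split; first by exists (0 - p (0 - w)), 0, 0.
by exists (p (0 + w) - 0); exact: upper_bound_lower.
Qed.

Let c := sup lower.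

Let c_ge u a : G (u, a) -> a - p (u - w) <= c.
Proof. by move=> Gu; apply: ub_le_sup; [case: lower_has_sup | exists u, a]. Qed.

Let c_le v b : G (v, b) -> c <= p (v + w) - b.
Proof.
by move=> Gv; apply: ge_sup; [case: lower_has_sup | exact: upper_bound_lower].
Qed.

Definition graph_extension : set (V * R) :=
  [set x | exists u a t, G (u, a) /\ x = (u + t *: w, a + t * c)].

Let extension_functional v a b :
  graph_extension (v, a) -> graph_extension (v, b) -> a = b.
Proof.
have [fun_G lin _ _] := gG.
move=> [u1 [a1 [t1 [Gu1 [-> ->]]]]] [u2 [a2 [t2 [Gu2 []]]]].
have [<-|t12] := eqVneq t1 t2.
  by move=> /addIr e12; rewrite e12 in Gu1 *; rewrite (fun_G _ _ _ Gu1 Gu2).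
move=> e; exfalso.
have e12 : (t1 - t2) *: w = u2 - u1.
  rewrite scalerBl (_ : t1 *: w = u2 + t2 *: w - u1).
    by rewrite addrAC addrK.
  by rewrite -e addrAC subrr add0r.
have t12' : t1 - t2 != 0 by rewrite subr_eq0.
apply: (w_out (a := (t1 - t2)^-1 * (a2 - a1))).
have := dominated_graphZ (t1 - t2)^-1 gG (lin (-1) _ _ _ _ Gu1 Gu2).
by rewrite scaleN1r mulN1r (addrC (- u1)) (addrC (- a1)) -e12 scalerA
  mulVf // scale1r.
Qed.

Let extension_dominated v a : graph_extension (v, a) -> a <= p v.
Proof.
have [_ _ dom _] := gG.
move=> [u [b [t [Gu [-> ->]]]]].
have [tgt0|tle0] := ltrP 0 t.
  have := c_le (dominated_graphZ t^-1 gG Gu).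
  have -> : u + t *: w = t *: (t^-1 *: u + w).
    by rewrite scalerDr scalerA mulfV ?scale1r // gt_eqF.
  rewrite p_homo // => hc.
  have : t * c <= t * (p (t^-1 *: u + w) - t^-1 * b) by rewrite ler_pM2l.
  by rewrite mulrBr mulrA mulfV ?gt_eqF // mul1r; lra.
have [->|tlt0] := eqVneq t 0.
  by rewrite scale0r addr0 mul0r addr0; exact: dom.
have tN : 0 < - t by rewrite oppr_gt0 lt_neqAle tlt0 tle0.
have := c_ge (dominated_graphZ (- t)^-1 gG Gu).
have -> : u + t *: w = - t *: ((- t)^-1 *: u - w).
  by rewrite scalerBr scalerA mulfV ?scale1r ?gt_eqF // scaleNr opprK.
rewrite p_homo // => hc.
have : - t * ((- t)^-1 * b - p ((- t)^-1 *: u - w)) <= - t * c.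
  by rewrite ler_pM2l.
by rewrite mulrBr mulrA mulfV ?gt_eqF // mul1r; lra.
Qed.

Lemma dominated_graph_extension : dominated_graph graph_extension.
Proof.
have [_ lin _ Gz0] := gG.
split; [exact: extension_functional | | exact: extension_dominated |].
- move=> t v1 a1 v2 a2 [u1 [b1 [t1 [Gu1 [-> ->]]]]] [u2 [b2 [t2 [Gu2 [-> ->]]]]].
  exists (t *: u1 + u2), (t * b1 + b2), (t * t1 + t2).
  split; first exact: lin.
  congr pair; last by ring.
  by rewrite scalerDr scalerDl scalerA addrACA.
- by exists z0, (p z0), 0; rewrite scale0r mul0r !addr0.
Qed.

Lemma sub_graph_extension : G `<=` graph_extension.
Proof. by move=> [u a] Gu; exists u, a, 0; rewrite scale0r mul0r !addr0. Qed.

Lemma graph_extension_w : graph_extension (w, c).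
Proof.
exists 0, 0, 1; rewrite add0r scale1r mul1r add0r.
by split => //; exact: dominated_graph0.
Qed.

End OneStepExtension.

Lemma hahn_banach_sublinear : exists psi : V -> R,
  [/\ linear_form psi, (forall x, psi x <= p x) & psi z0 = p z0].
Proof.
have [G [PG Gmax]] := Zorn_bigcup bigcup_dominated_graph.
have gG : dominated_graph G.
  case: PG => // G0; exfalso; apply: (Gmax _ _ (or_intror dominated_line_graph)).
  rewrite G0; split => // /(_ (z0, p z0)); apply.
  by exists 1 => //; rewrite scale1r mul1r.
have Gtotal v : exists a, G (v, a).
  apply: contrapT => v_out.
  have w_out a : ~ G (v, a) by move=> Gva; apply: v_out; exists a.
  apply: (Gmax (graph_extension G v)); last first.
    by right; exact: dominated_graph_extension.
  split; first exact: sub_graph_extension.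
  by move=> /(_ _ (graph_extension_w gG v)) /w_out.
have [psi psiG] := choice Gtotal.
have [fun_G lin dom Gz0] := gG.
exists psi; split.
- by move=> a x y; apply: fun_G (psiG _) _; exact: lin.
- by move=> x; exact: dom.
- exact: fun_G (psiG _) Gz0.
Qed.

End HahnBanach.

Section BoundedLinear.
Variables (R : realType) (Y : normedModType R).

Definition bounded_linear (psi : Y -> R) :=
  linear_form psi /\ exists C, 0 <= C /\ forall z, `|psi z| <= C * `|z|.

Lemma bounded_linear_cvg psi (T : Type) (F : set_system T) {FF : Filter F}
    (f : T -> Y) (a : Y) :
  bounded_linear psi -> f @ F --> a -> (psi \o f) @ F --> psi a.
Proof.
move=> [lin [C [C0 psiC]]] fa; apply/cvgrPdist_lt => e e0.
have eC : 0 < e / (C + 1) by rewrite divr_gt0 //; lra.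
move/cvgrPdist_lt: fa => /(_ _ eC); apply: filterS => x /= hx.
rewrite -linear_formB //; apply: le_lt_trans (psiC _) _.
have : `|a - f x| * (C + 1) < e by rewrite -ltr_pdivlMr //; lra.
by have := normr_ge0 (a - f x); nra.
Qed.

Lemma bounded_linear_opp psi : bounded_linear psi -> bounded_linear (fun z => - psi z).
Proof.
move=> [lin [C [C0 psiC]]]; split; first by move=> a x y; rewrite lin opprD mulrN.
by exists C; split => // z; rewrite normrN.
Qed.

Lemma dual_elt_bounded_linear l : is_dual_elt l -> bounded_linear l.
Proof.
move=> [lin l_cont]; split => //.
have l0 := linear_form0 lin; have lZ := linear_formZ lin.
have /cvgrPdist_lt /(_ 1 ltr01) /nbhs_norm0P [r /= r0 lr] := l_cont 0.
exists (2 / r); split; first by rewrite divr_ge0 // ltW.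
move=> z; have [->|z0] := eqVneq z 0; first by rewrite l0 !normr0 mulr0.
have nz : 0 < `|z| by rewrite normr_gt0.
(* [l] is bounded by 1 on the ball of radius [r], which contains [r / (2 |z|) z]. *)
have t0 : 0 < r / (2 * `|z|) by rewrite divr_gt0 // mulr_gt0.
have : `|r / (2 * `|z|) *: z| < r.
  rewrite normrZ gtr0_norm // (_ : r / (2 * `|z|) * `|z| = r / 2); first lra.
  by field; rewrite gt_eqF.
move/lr; rewrite l0 add0r normrN lZ normrM gtr0_norm // => lt1.
rewrite (_ : 2 / r * `|z| = (r / (2 * `|z|))^-1); last by field; rewrite !gt_eqF.
by apply: ltW; rewrite -(ltr_pM2l t0) mulfV ?gt_eqF.
Qed.

Lemma dominated_bounded_linear psi (C : R) :
  linear_form psi -> 0 <= C -> (forall z, psi z <= C * `|z|) -> bounded_linear psi.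
Proof.
move=> lin C0 psiC; split => //; exists C; split => // z.
have := psiC (- z); rewrite (linear_formN lin) normrN ler_norml.
by have := psiC z; lra.
Qed.

Lemma norming_functional (y : Y) :
  exists psi, [/\ bounded_linear psi, (forall z, psi z <= `|z|) & psi y = `|y|].
Proof.
have norm_homo (t : R) (x : Y) : 0 < t -> `|t *: x| = t * `|x|.
  by move=> t0; rewrite normrZ gtr0_norm.
have [psi [lin psi_le psi_y]] :=
  hahn_banach_sublinear (@ler_normD _ Y) norm_homo y.
exists psi; split => //.
by apply: (dominated_bounded_linear lin ler01) => z; rewrite mul1r.
Qed.

Lemma bounded_linear_uniform_bound (k : nat) (l : nat -> Y -> R) :
  (forall i, bounded_linear (l i)) ->
  exists C, 0 <= C /\ forall i z, (i < k)%N -> `|l i z| <= C * `|z|.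
Proof.
move=> l_bl; elim: k => [|k [C [C0 lC]]]; first by exists 0; split.
have [Ck [Ck0 lkC]] := (l_bl k).2.
exists (C + Ck); split; first exact: addr_ge0.
move=> i z; rewrite ltnS leq_eqVlt => /orP[/eqP ->|ik].
  by apply: le_trans (lkC z) _; rewrite ler_wpM2r // lerDr.
by apply: le_trans (lC _ _ ik) _; rewrite ler_wpM2r // lerDl.
Qed.

End BoundedLinear.

Section UnitSphere.
Variables (R : realType) (Y : normedModType R).

Lemma normalize_dist (u : Y) : u != 0 -> `|u - `|u|^-1 *: u| = `| `|u| - 1|.
Proof.
move=> u0; have nu : 0 < `|u| by rewrite normr_gt0.
rewrite -[X in X - _]scale1r -scalerBl normrZ -[X in _ * X]normr_id -normrM.
by rewrite mulrBl mul1r mulVf ?gt_eqF.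
Qed.

Lemma strictly_convex_combination_eq : strictly_convex Y ->
  forall (y a b : Y) (w : R), `|y| = 1 -> `|a| <= 1 -> `|b| <= 1 -> 0 < w -> w < 1 ->
  y = w *: a + (1 - w) *: b -> a = y.
Proof.
move=> SC y a b w ny na nb w0 w1 yab.
have : `|y| <= w * `|a| + (1 - w) * `|b|.
  rewrite {1}yab; apply: le_trans (ler_normD _ _) _.
  by rewrite !normrZ !ger0_norm // ?subr_ge0 ?ltW.
rewrite ny => ny_le.
have na1 : `|a| = 1 by apply/eqP; rewrite eq_le na /=; nra.
have nb1 : `|b| = 1 by apply/eqP; rewrite eq_le nb /=; nra.
have [ab|ab] := eqVneq a b; first by rewrite yab -ab -scalerDl addrC subrK scale1r.
exfalso; have /eqP ab' := ab.
have := SC a b na1 nb1 ab'; set m := 2^-1 *: (a + b) => nm.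
(* [y] is also a proper convex combination of [m] and one of [a], [b]. *)
have [wle|wgt] := lerP w (2^-1).
  have yE : y = (2 * w) *: m + (1 - 2 * w) *: b.
    rewrite yab /m scalerA scalerDr -addrA -scalerDl.
    by congr (_ *: _ + _ *: _); field.
  suff : `|y| < 1 by rewrite ny ltxx.
  rewrite yE; apply: le_lt_trans (ler_normD _ _) _.
  by rewrite normrZ (normrZ (1 - 2 * w)) !ger0_norm ?nb1; nra.
have yE : y = (2 * w - 1) *: a + (2 * (1 - w)) *: m.
  rewrite yab /m scalerA scalerDr addrA -scalerDl.
  by congr (_ *: _ + _ *: _); field.
suff : `|y| < 1 by rewrite ny ltxx.
rewrite yE; apply: le_lt_trans (ler_normD _ _) _.
by rewrite normrZ (normrZ (2 * (1 - w))) !ger0_norm ?na1; nra.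
Qed.

Lemma strictly_convex_split : strictly_convex Y ->
  forall (y a : Y) (w : R), `|y| = 1 -> 0 < w -> `|a| <= w -> `|y - a| <= 1 - w ->
  a = w *: y.
Proof.
move=> SC y a w ny w0 na nya.
have w1 : w <= 1 by have := normr_ge0 (y - a); lra.
have [w_eq1|w_neq1] := eqVneq w 1.
  move: nya; rewrite w_eq1 subrr scale1r normr_le0 subr_eq0.
  by move=> /eqP.
have w_lt1 : w < 1 by rewrite lt_neqAle w_neq1.
have w0' : w != 0 by rewrite gt_eqF.
have w1' : 1 - w != 0 by rewrite subr_eq0 eq_sym.
have : w^-1 *: a = y.
  apply: (strictly_convex_combination_eq SC (b := (1 - w)^-1 *: (y - a)) ny _ _ w0 w_lt1).
  - by rewrite normrZ normfV gtr0_norm // ler_pdivrMl // mulr1.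
  - by rewrite normrZ normfV gtr0_norm ?subr_gt0 // ler_pdivrMl ?subr_gt0 // mulr1.
  - by rewrite !scalerA !mulfV // !scale1r addrC subrK.
by move=> <-; rewrite scalerA mulfV // scale1r.
Qed.

End UnitSphere.

Section Ultrafilters.
Variables (T : Type) (U : set_system T).
Hypothesis UU : UltraFilter U.

Lemma ultra_fmap (V : Type) (f : T -> V) : UltraFilter (f @ U).
Proof.
split; first exact: fmap_proper_filter.
move=> G GF UG; apply/seteqP; split => // A GA.
have [//|UAc] := in_ultra_setVsetC (f @^-1` A) UU.
by have [? []] := filter_ex (filterI GA (UG (~` A) UAc)).
Qed.

Lemma ultra_finite_choice (C : finType) (P : C -> set T) :
  U [set n | exists c, P c n] -> exists c, U (P c).
Proof.
move=> UP; apply: contrapT => noP.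
have UPc c : U (~` P c).
  by have [UPc|] := in_ultra_setVsetC (P c) UU; [case: noP; exists c|].
have [n [[c Pcn]]] := filter_ex (filterI UP (filter_forall _ UPc)).
by move=> /(_ c).
Qed.

Lemma ultra_cvg_bounded (R : realType) (x : T -> R) (M : R) :
  U [set n | `|x n| <= M] -> exists a : R, x @ U --> a.
Proof.
move=> xM; have xM' : (x @ U) `[- M, M]%classic.
  by rewrite /fmap /=; apply: filterS xM => n; rewrite /= in_itv /= -ler_norml.
have := @segment_compact R (- M) M; rewrite compact_ultra.
by move=> /(_ _ (ultra_fmap x) xM') [a [_ xa]]; exists a.
Qed.

End Ultrafilters.

Lemma cvg_harmonic_dist (R : realType) (V : normedModType R) (x : nat -> V) (a : V) :
  (forall n, `|a - x n| < n.+1%:R^-1) -> x @ \oo --> a.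
Proof.
move=> xa; apply/cvgrPdist_lt => e e0.
move/cvgrPdist_lt: (@cvg_harmonic R) => /(_ e e0).
apply: filterS => n /=; rewrite sub0r normrN ger0_norm // => ne.
exact: lt_trans (xa n) ne.
Qed.

Lemma exists_ge_mean (R : realType) (C : finType) (a : C -> R) :
  0 < \sum_c a c -> exists c, \sum_c' a c' <= #|C|%:R * a c.
Proof.
case: (pickP (fun _ : C => true)) => [c0 _ _|C0]; last by rewrite big_pred0 // ltxx.
exists [arg max_(c > c0) a c]%O; case: arg_maxP => // c _ cmax.
rewrite -sum1_card natr_sum mulr_suml; apply: ler_sum => c' _.
by rewrite mul1r; exact: cmax.
Qed.

Section NonnegCombinations.
Variables (R : realType) (Y : normedModType R).
Implicit Types (S : set Y) (l : seq (R * Y)).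

Definition comb l := \sum_(x <- l) x.1 *: x.2.
Definition weight l := \sum_(x <- l) x.1.
Definition nonneg_over S l := forall x, x \in l -> 0 <= x.1 /\ S x.2.
Definition scale_weights (t : R) l := [seq (t * x.1, x.2) | x <- l].

Lemma nonneg_over_cat S l1 l2 :
  nonneg_over S l1 -> nonneg_over S l2 -> nonneg_over S (l1 ++ l2).
Proof. by move=> S1 S2 x; rewrite mem_cat => /orP[/S1|/S2]. Qed.

Lemma nonneg_over_filter S (p : pred Y) l :
  nonneg_over S l -> nonneg_over (S `&` [set y | p y]) [seq x <- l | p x.2].
Proof. by move=> Sl x; rewrite mem_filter => /andP[px /Sl[]]. Qed.

Lemma nonneg_over_scale S t l :
  0 <= t -> nonneg_over S l -> nonneg_over S (scale_weights t l).
Proof.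
move=> t0 Sl _ /mapP[x /Sl [x0 Sx] ->] /=.
by split => //; exact: mulr_ge0.
Qed.

Lemma comb_cat l1 l2 : comb (l1 ++ l2) = comb l1 + comb l2.
Proof. exact: big_cat. Qed.

Lemma weight_cat l1 l2 : weight (l1 ++ l2) = weight l1 + weight l2.
Proof. exact: big_cat. Qed.

Lemma comb_scale t l : comb (scale_weights t l) = t *: comb l.
Proof. by rewrite /comb big_map scaler_sumr; apply: eq_bigr => x _; rewrite scalerA. Qed.

Lemma weight_scale t l : weight (scale_weights t l) = t * weight l.
Proof. by rewrite /weight big_map mulr_sumr. Qed.

Lemma comb_filterC (p : pred Y) l :
  comb l - comb [seq x <- l | p x.2] = comb [seq x <- l | ~~ p x.2].
Proof. by rewrite /comb !big_filter (bigID (fun x => p x.2)) /= addrC addrK. Qed.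

Lemma weight_filterC (p : pred Y) l :
  weight l - weight [seq x <- l | p x.2] = weight [seq x <- l | ~~ p x.2].
Proof. by rewrite /weight !big_filter (bigID (fun x => p x.2)) /= addrC addrK. Qed.

Lemma weight_ge0 S l : nonneg_over S l -> 0 <= weight l.
Proof. by move=> Sl; rewrite /weight big_seq sumr_ge0 // => x /Sl[]. Qed.

Lemma norm_comb_le S l : (forall s, S s -> `|s| <= 1) -> nonneg_over S l ->
  `|comb l| <= weight l.
Proof.
move=> S1 Sl; apply: le_trans (ler_norm_sum _ _ _) _.
rewrite /weight !big_seq; apply: ler_sum => x /Sl [x0 Sx].
by rewrite normrZ ger0_norm //; have := S1 _ Sx; nra.
Qed.

Lemma weight_le_sum_cover S (C : finType) (p : C -> pred Y) l :
  nonneg_over S l -> (forall s, S s -> exists c, p c s) ->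
  weight l <= \sum_c weight [seq x <- l | p c x.2].
Proof.
move=> Sl cover; under [X in _ <= X]eq_bigr do rewrite /weight big_filter big_mkcond.
rewrite exchange_big /weight big_seq [X in _ <= X]big_seq.
apply: ler_sum => x /Sl [x0 /cover [c pc]].
rewrite -big_mkcond sumr_const -mulr_natr ler_peMr // ler1n.
by apply/card_gt0P; exists c.
Qed.

Lemma exists_heavy_filter S (C : finType) (p : C -> pred Y) l :
  nonneg_over S l -> (forall s, S s -> exists c, p c s) -> 0 < weight l ->
  exists c, weight l <= #|C|%:R * weight [seq x <- l | p c x.2].
Proof.
move=> Sl cover wl; have sum_ge := weight_le_sum_cover Sl cover.
have [c cmax] := exists_ge_mean (lt_le_trans wl sum_ge).
by exists c; exact: le_trans sum_ge cmax.
Qed.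

Lemma bounded_linear_comb_ge S (psi : Y -> R) (beta : R) l :
  bounded_linear psi -> (forall s, S s -> beta <= psi s) -> nonneg_over S l ->
  beta * weight l <= psi (comb l).
Proof.
move=> psi_bl Sbeta Sl; rewrite /comb (linear_form_sum psi_bl.1) /weight.
rewrite mulr_sumr !big_seq; apply: ler_sum => x /Sl [x0 Sx].
by rewrite (linear_formZ psi_bl.1) mulrC ler_wpM2l // Sbeta.
Qed.

Section HullGauge.
Variables (S : set Y) (r : R).
Hypothesis r0 : 0 < r.

(* Hahn-Banach applied to this sublinear gauge turns the dual description of
   the closed convex hull of [S] into approximation by combinations of points
   of [S] ([hull_approximation]). *)
Definition hull_gauge (z : Y) :=
  inf [set r * `|z - comb l| + weight l | l in nonneg_over S].

Let gauge_set_lb z : lbound [set r * `|z - comb l| + weight l | l in nonneg_over S] 0.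
Proof.
by move=> _ [l Sl <-]; rewrite addr_ge0 ?(weight_ge0 Sl) // mulr_ge0 // ltW.
Qed.

Let gauge_set_has_inf z :
  has_inf [set r * `|z - comb l| + weight l | l in nonneg_over S].
Proof.
split; first by exists (r * `|z - comb [::]| + weight [::]), [::].
by exists 0; exact: gauge_set_lb.
Qed.

Let hull_gauge_le z l : nonneg_over S l -> hull_gauge z <= r * `|z - comb l| + weight l.
Proof. by move=> Sl; apply: ge_inf; [exists 0; exact: gauge_set_lb | exists l]. Qed.

Lemma hull_gauge_le_norm z : hull_gauge z <= r * `|z|.
Proof.
have S0 : nonneg_over S [::] by [].
have := hull_gauge_le z S0.
by rewrite /comb /weight !big_nil subr0 addr0.
Qed.

Lemma hull_gauge_le1 s : S s -> hull_gauge s <= 1.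
Proof.
move=> Ss; have : nonneg_over S [:: (1, s)] by move=> x; rewrite inE => /eqP ->.
move/(hull_gauge_le s); rewrite /comb /weight !big_seq1 scale1r subrr normr0 mulr0.
by rewrite add0r.
Qed.

Lemma hull_gauge_subadd x y : hull_gauge (x + y) <= hull_gauge x + hull_gauge y.
Proof.
apply/ler_addgt0Pr => e e0.
have e2 : 0 < e / 2 by rewrite divr_gt0.
have [_ [l1 Sl1 <-] h1] := inf_adherent e2 (gauge_set_has_inf x).
have [_ [l2 Sl2 <-] h2] := inf_adherent e2 (gauge_set_has_inf y).
have := hull_gauge_le (x + y) (nonneg_over_cat Sl1 Sl2).
rewrite comb_cat weight_cat.
have : `|x + y - (comb l1 + comb l2)| <= `|x - comb l1| + `|y - comb l2|.
  by rewrite opprD addrACA; exact: ler_normD.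
rewrite -(ler_pM2l r0) mulrDr -/(hull_gauge x) -/(hull_gauge y) in h1 h2 *.
lra.
Qed.

Let hull_gauge_homo_le (t : R) x : 0 < t -> hull_gauge (t *: x) <= t * hull_gauge x.
Proof.
move=> t0; rewrite mulrC -ler_pdivrMr //.
apply: lb_le_inf; first by case: (gauge_set_has_inf x).
move=> _ [l Sl <-]; rewrite ler_pdivrMr //.
apply: le_trans (hull_gauge_le _ (nonneg_over_scale (ltW t0) Sl)) _.
rewrite comb_scale weight_scale -scalerBr normrZ gtr0_norm //.
by rewrite le_eqVlt; apply/orP; left; apply/eqP; ring.
Qed.

Lemma hull_gauge_homo (t : R) x : 0 < t -> hull_gauge (t *: x) = t * hull_gauge x.
Proof.
move=> t0; apply/eqP; rewrite eq_le hull_gauge_homo_le //=.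
have ti : 0 < t^-1 by rewrite invr_gt0.
have := hull_gauge_homo_le (t *: x) ti; rewrite scalerA mulVf ?gt_eqF // scale1r.
by rewrite -ler_pdivlMl // mulrC.
Qed.

End HullGauge.

Lemma hull_approximation (S : set Y) (y0 : Y) :
  (forall psi, bounded_linear psi -> (forall s, S s -> psi s <= 1) -> psi y0 <= 1) ->
  forall e, 0 < e -> exists l,
    [/\ nonneg_over S l, `|y0 - comb l| < e & weight l < 1 + e].
Proof.
move=> sep e e0.
pose r := (1 + e) / e; have r0 : 0 < r by rewrite divr_gt0 //; lra.
have [psi [lin psi_le psi_y0]] := hahn_banach_sublinear
  (hull_gauge_subadd S r0) (hull_gauge_homo S r0) y0.
have psi_bl : bounded_linear psi.
  apply: (dominated_bounded_linear lin (ltW r0)) => z.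
  exact: le_trans (psi_le z) (hull_gauge_le_norm S r0 z).
have := sep _ psi_bl (fun s Ss => le_trans (psi_le s) (hull_gauge_le1 r0 Ss)).
rewrite psi_y0 => gauge_le1.
have : hull_gauge S r y0 < 1 + e by lra.
case/inf_lt; first by exists (r * `|y0 - comb [::]| + weight [::]), [::].
move=> _ [l Sl <-] lt1e; exists l; split => //; last first.
  by have := normr_ge0 (y0 - comb l); have := weight_ge0 Sl; nra.
have re : r * e = 1 + e by rewrite /r divfK // gt_eqF.
have : r * `|y0 - comb l| < r * e by rewrite re; have := weight_ge0 Sl; lra.
by rewrite ltr_pM2l.
Qed.

End NonnegCombinations.

Lemma kadec_klee_slice (R : realType) (Y : normedModType R) (y0 : Y) (ys : Y -> R) :
  kadec_klee Y -> `|y0| = 1 -> (forall z, ys z <= `|z|) ->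
  forall e, 0 < e -> exists (k : nat) (m : nat -> Y -> R) (eta : R),
    [/\ forall i, bounded_linear (m i), 0 < eta &
        forall u, `|u| <= 1 + eta -> 1 - eta < ys u ->
          (forall i, (i < k)%N -> `|m i u - m i y0| < eta) -> `|u - y0| < e].
Proof.
move=> KK ny0 ys_le e e0.
have e2 : 0 < e / 2 by rewrite divr_gt0.
have [k [m [d [m_dual [d0 md]]]]] := (KK y0 ny0).1 _ e2.
have m_bl i : bounded_linear (m i) by exact: dual_elt_bounded_linear.
have [C [C0 mC]] := bounded_linear_uniform_bound k m_bl.
pose eta := Num.min (2^-1) (Num.min (e / 4) (d / (C + 1))).
have eta0 : 0 < eta.
  by rewrite !lt_min invr_gt0 ltr0n divr_gt0 //= divr_gt0 //; lra.
have eta_le : [/\ eta <= 2^-1, eta <= e / 4 & eta <= d / (C + 1)].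
  by rewrite !ge_min !lexx !orbT.
have [eta2 eta_e eta_d] := eta_le.
exists k, m, eta; split => // u nu ysu mu.
have u_gt : 1 - eta < `|u| := lt_le_trans ysu (ys_le u).
have u0 : u != 0 by rewrite -normr_gt0; lra.
have nu1 : `| `|u| - 1| <= eta by rewrite ler_norml; apply/andP; split; lra.
pose z := `|u|^-1 *: u.
have nz : `|z| = 1 by rewrite normrZ normfV normr_id mulVf // normr_eq0.
have uz : `|u - z| <= eta by rewrite normalize_dist.
have : `|z - y0| < e / 2.
  apply: md => // i ik.
  have : `|m i u - m i z| <= C * eta.
    rewrite -(linear_formB (m_bl i).1); apply: le_trans (mC _ _ ik) _.
    exact: ler_wpM2l.
  have : (C + 1) * eta <= d by rewrite mulrC -ler_pdivlMr //; lra.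
  have := mu i ik; have := ler_distD (m i u) (m i z) (m i y0).
  by rewrite (distrC (m i z) (m i u)); lra.
have := ler_distD z u y0; lra.
Qed.

(* [P n + V n] splits a near-optimal combination approximating [y0] into the
   part [P n] carried by one half-space, of weight [W n], and the rest. *)
Section UltraCauchy.
Variables (R : realType) (Y : completeNormedModType R).
Hypotheses (SC : strictly_convex Y) (KK : kadec_klee Y).
Variable y0 : Y.
Hypothesis ny0 : `|y0| = 1.
Variables (U : set_system nat) (UU : UltraFilter U).
Variables (P V : nat -> Y) (W s : nat -> R).
Hypothesis PV_cvg : (fun n => P n + V n) @ U --> y0.
Hypothesis s_cvg : s @ U --> (1 : R).
Hypothesis P_le : forall n, `|P n| <= W n.
Hypothesis V_le : forall n, `|V n| <= s n - W n.

Let W_ge0 n : 0 <= W n.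
Proof. exact: le_trans (normr_ge0 _) (P_le n). Qed.

Let P_le_s n : `|P n| <= s n.
Proof. by have := V_le n; have := P_le n; have := normr_ge0 (V n); lra. Qed.

Let V_le_s n : `|V n| <= s n.
Proof. by have := V_le n; have := W_ge0 n; lra. Qed.

Let s_le2 : U [set n | s n <= 2].
Proof.
move/cvgrPdist_lt: s_cvg => /(_ 1 ltr01); apply: filterS => n /=.
by rewrite ltr_norml; lra.
Qed.

Let bounded_linear_ultra_cvg psi (Q : nat -> Y) :
  bounded_linear psi -> (forall n, `|Q n| <= s n) -> exists a : R, (psi \o Q) @ U --> a.
Proof.
move=> psi_bl Qs; have [C [C0 psiC]] := psi_bl.2.
apply: (ultra_cvg_bounded UU (M := C * 2)); apply: filterS s_le2 => n /= sn.
by apply: le_trans (psiC _) _; apply: ler_wpM2l => //; exact: le_trans (Qs n) sn.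
Qed.

Let W_ultra_cvg : exists w : R, W @ U --> w.
Proof.
apply: (ultra_cvg_bounded UU (M := 2)); apply: filterS s_le2 => n /= sn.
by rewrite ger0_norm //; have := P_le_s n; have := V_le n; have := normr_ge0 (V n); lra.
Qed.

Let limit_split psi a b : bounded_linear psi ->
  (psi \o P) @ U --> a -> (psi \o V) @ U --> b -> a + b = psi y0.
Proof.
move=> psi_bl Pa Vb; apply: (norm_cvg_unique (cvgD Pa Vb)).
have -> : (psi \o P) + (psi \o V) = psi \o (fun n => P n + V n).
  by apply/funext => n /=; rewrite (linear_formD psi_bl.1).
exact: (bounded_linear_cvg psi_bl PV_cvg).
Qed.

(* [P n + V n'] lies in a thin slice of the ball at [y0] and is weakly close to
   [y0], so Kadec-Klee applies. *)
Lemma P_V_close e : 0 < e -> exists A B,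
  [/\ U A, U B & forall n n', A n -> B n' -> `|P n + V n' - y0| < e].
Proof.
move=> e0.
have [ys [ys_bl ys_le ys_y0]] := norming_functional y0; rewrite ny0 in ys_y0.
have [k [m [eta [m_bl eta0 slice]]]] := kadec_klee_slice KK ny0 ys_le e0.
have [lam lamP] := choice (fun i => bounded_linear_ultra_cvg (m_bl i) P_le_s).
have [rho rhoP] := choice (fun i => bounded_linear_ultra_cvg (m_bl i) V_le_s).
have [gP gPP] := bounded_linear_ultra_cvg ys_bl P_le_s.
have [gV gVP] := bounded_linear_ultra_cvg ys_bl V_le_s.
have [w Ww] := W_ultra_cvg.
have lam_rho i : lam i + rho i = m i y0 := limit_split (m_bl i) (lamP i) (rhoP i).
have gPV : gP + gV = 1 by rewrite (limit_split ys_bl gPP gVP).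
pose t := eta / 3; have t0 : 0 < t by rewrite divr_gt0.
have eta_t : eta = 3 * t by rewrite /t mulrC divfK.
have near_lim (f : nat -> R) a : f @ U --> a -> U [set n | `|a - f n| < t].
  by move/cvgrPdist_lt => /(_ _ t0).
exists [set n | [/\ forall i : 'I_k, `|lam i - m i (P n)| < t,
  `|gP - ys (P n)| < t & `|w - W n| < t]].
exists [set n | [/\ forall i : 'I_k, `|rho i - m i (V n)| < t,
  `|gV - ys (V n)| < t, `|w - W n| < t & `|1 - s n| < t]].
split.
- apply: filterS (filterI (filter_forall _ (fun i : 'I_k => near_lim _ _ (lamP i)))
    (filterI (near_lim _ _ gPP) (near_lim _ _ Ww))).
  by move=> n [? [? ?]].
- apply: filterS (filterI (filter_forall _ (fun i : 'I_k => near_lim _ _ (rhoP i)))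
    (filterI (near_lim _ _ gVP) (filterI (near_lim _ _ Ww) (near_lim _ _ s_cvg)))).
  by move=> n [? [? [? ?]]].
move=> n n' [An1 An2 An3] [Bn1 Bn2 Bn3 Bn4]; apply: slice.
- apply: le_trans (ler_normD _ _) _.
  have := P_le n; have := V_le n'.
  by move: An3 Bn3 Bn4; rewrite !ltr_norml; lra.
- rewrite (linear_formD ys_bl.1).
  by move: An2 Bn2; rewrite !ltr_norml; lra.
- move=> i ik; rewrite (linear_formD (m_bl i).1) -lam_rho.
  have := An1 (Ordinal ik); have := Bn1 (Ordinal ik); rewrite /= !ltr_norml.
  by lra.
Qed.

Lemma P_ultra_cauchy : cauchy (P @ U).
Proof.
apply/cauchy_ballP => e e0.
have [A [B [UA UB close]]] := P_V_close (divr_gt0 e0 (ltr0n R 2)).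
have [n' Bn'] := filter_ex UB.
exists (P @` A, P @` A) => /=.
  by split; apply: (filterS (P := A)) => // n An; exists n.
move=> [_ _] [/= [n1 An1 <-] [n2 An2 <-]]; rewrite -ball_normE /ball_ /=.
have := close _ _ An1 Bn'; have := close _ _ An2 Bn'.
rewrite -[P n1 + V n' - y0]addrA -[P n2 + V n' - y0]addrA -(opprB y0 (V n')).
rewrite (distrC (P n2)); have := ler_distD (y0 - V n') (P n1) (P n2); lra.
Qed.

Lemma P_ultra_lim : exists (Pst : Y) (w : R),
  [/\ P @ U --> Pst, W @ U --> w & 0 < w -> Pst = w *: y0].
Proof.
have PPst : P @ U --> lim (P @ U) by exact: cauchy_cvg P_ultra_cauchy.
set Pst := lim (P @ U) in PPst *.
have [w Ww] := W_ultra_cvg.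
exists Pst, w; split => // w0.
have y0P : (fun n => `|y0 - P n|) @ U --> `|y0 - Pst|.
  exact: cvg_norm (cvgB (cvg_cst y0) PPst).
have rest : (fun n => `|y0 - (P n + V n)| + (s n - W n)) @ U --> `|y0 - y0| + (1 - w).
  exact: cvgD (cvg_norm (cvgB (cvg_cst y0) PV_cvg)) (cvgB s_cvg Ww).
rewrite subrr normr0 add0r in rest.
apply: strictly_convex_split => //.
  by apply: ler_cvg_to (cvg_norm PPst) Ww _; exact: filterE.
apply: ler_cvg_to y0P rest _; apply: filterE => n /=.
have := V_le n; have := ler_distD (P n + V n) y0 (P n).
by rewrite addrAC subrr add0r; lra.
Qed.

Lemma ultra_halfspace_contra (phi : Y -> R) (beta alpha : R) :
  bounded_linear phi -> phi y0 < beta -> (forall n, beta * W n <= phi (P n)) ->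
  0 < alpha -> U [set n | alpha <= W n] -> False.
Proof.
move=> phi_bl phi_y0 PW alpha0 UW.
have [Pst [w [PPst Ww PstE]]] := P_ultra_lim.
have w_ge : alpha <= w by apply: ler_cvg_to (cvg_cst alpha) Ww UW.
have bW : (fun n => beta * W n) @ U --> beta * w.
  exact: cvgM (cvg_cst beta) Ww.
have : beta * w <= phi Pst.
  by apply: ler_cvg_to bW (bounded_linear_cvg phi_bl PPst) _; exact: filterE.
rewrite PstE ?(linear_formZ phi_bl.1); last lra.
by rewrite mulrC ler_pM2l; lra.
Qed.

End UltraCauchy.

Section ClosedHull.
Variables (R : realType) (Y : completeNormedModType R).
Hypotheses (SC : strictly_convex Y) (KK : kadec_klee Y).
Variables (S : set Y) (y0 : Y).
Hypothesis S1 : forall s, S s -> `|s| <= 1.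
Hypothesis ny0 : `|y0| = 1.
Hypothesis y0_hull :
  forall psi, bounded_linear psi -> (forall s, S s -> psi s <= 1) -> psi y0 <= 1.

Lemma hull_approximating_seq : exists l : nat -> seq (R * Y), forall n,
  [/\ nonneg_over S (l n), `|y0 - comb (l n)| < n.+1%:R^-1 &
      `|1 - weight (l n)| < n.+1%:R^-1].
Proof.
have inv_gt0 n : 0 < n.+1%:R^-1 :> R by rewrite invr_gt0 ltr0Sn.
have [l lP] := choice (fun n => hull_approximation y0_hull (inv_gt0 n)).
exists l => n; have [Sl ly0 lw] := lP n; split => //.
have := ler_distD (comb (l n)) y0 0; rewrite !subr0 ny0.
have := norm_comb_le S1 Sl; move: ly0 lw; set t := n.+1%:R^-1 => ? ? ? ?.
by rewrite ltr_norml; apply/andP; split; lra.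
Qed.

Lemma hull_not_halfspace_covered (C : finType) (phi : C -> Y -> R) (beta : C -> R) :
  (forall c, bounded_linear (phi c)) -> (forall c, phi c y0 < beta c) ->
  ~ (forall s, S s -> exists c, beta c <= phi c s).
Proof.
move=> phi_bl phi_y0 cover.
have [l lP] := hull_approximating_seq.
have [U [UU Uinf]] := @ultraFilterLemma nat \oo _.
have to_U (V : normedModType R) (x : nat -> V) (a : V) : x @ \oo --> a -> x @ U --> a.
  by move=> xa; exact: cvg_trans (cvg_app x Uinf) xa.
pose inH c y := beta c <= phi c y.
pose class c n := [seq x <- l n | inH c x.2].
(* Along [U], one half-space carries a fixed fraction of the weight. *)
have [c0 Uc0] : exists c0, U [set n | 2^-1 <= #|C|%:R * weight (class c0 n)].
  apply: ultra_finite_choice; apply: filterS (Uinf _ (nbhs_infty_ge 1)) => n n1 /=.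
  have [Sl _ lw] := lP n.
  have w_half : 2^-1 <= weight (l n).
    have : n.+1%:R^-1 <= 2^-1 :> R by rewrite lef_pV2 ?posrE // ler_nat ltnS.
    by move: lw; set t := n.+1%:R^-1; rewrite ltr_norml => /andP[? ?]; lra.
  have [|c wc] := exists_heavy_filter Sl cover; first by apply: lt_le_trans w_half.
  by exists c; exact: le_trans w_half wc.
have C_gt0 : 0 < #|C|%:R :> R by rewrite ltr0n; apply/card_gt0P; exists c0.
apply: (ultra_halfspace_contra SC KK ny0 UU
  (P := fun n => comb (class c0 n)) (V := fun n => comb (l n) - comb (class c0 n))
  (W := fun n => weight (class c0 n)) (s := fun n => weight (l n))
  _ _ _ _ (phi_bl c0) (phi_y0 c0) _ (alpha := (2 * #|C|%:R)^-1)).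
- apply: to_U; apply: cvg_harmonic_dist => n.
  by rewrite subrKC; have [] := lP n.
- by apply: to_U; apply: cvg_harmonic_dist => n; have [] := lP n.
- move=> n; have [Sl _ _] := lP n.
  by apply: norm_comb_le _ (nonneg_over_filter (p := inH c0) Sl) => s [/S1].
- move=> n; have [Sl _ _] := lP n.
  rewrite /class comb_filterC weight_filterC.
  by apply: norm_comb_le _ (nonneg_over_filter (p := predC (inH c0)) Sl) => s [/S1].
- move=> n; have [Sl _ _] := lP n.
  apply: bounded_linear_comb_ge (nonneg_over_filter (p := inH c0) Sl) => //.
  by move=> s [].
- by rewrite invr_gt0 mulr_gt0.
- apply: filterS Uc0 => n /=.
  by rewrite invfM -ler_pdivrMl // mulrC.
Qed.

Lemma sphere_hull_in_closure : forall e, 0 < e -> exists s, S s /\ `|s - y0| < e.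
Proof.
move=> e e0; apply: contrapT => far.
have [ys [ys_bl ys_le ys_y0]] := norming_functional y0; rewrite ny0 in ys_y0.
have [k [m [eta [m_bl eta0 slice]]]] := kadec_klee_slice KK ny0 ys_le e0.
(* [S] is covered by the half-spaces [ys <= 1 - eta] and [+-(m i - m i y0) >= eta]. *)
pose phi (c : option ('I_k * bool)) : Y -> R :=
  if c is Some (i, b) then (if b then m i else fun z => - m i z) else fun z => - ys z.
pose beta (c : option ('I_k * bool)) : R :=
  if c is Some (i, b) then (if b then m i y0 else - m i y0) + eta else eta - 1.
apply: (@hull_not_halfspace_covered _ phi beta).
- by case=> [[i []]|] /=; [exact: m_bl | exact: bounded_linear_opp | exact: bounded_linear_opp].
- by case=> [[i []]|] /=; lra.
move=> s Ss; have [ys_s|ys_s] := lerP (ys s) (1 - eta).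
  by exists None => /=; lra.
have : ~ (forall i, (i < k)%N -> `|m i s - m i y0| < eta).
  move=> s_near; apply: far; exists s; split => //; apply: slice => //.
  by have := S1 Ss; lra.
move/existsPNP => [i ik /negP]; rewrite -leNgt ler_normr => /orP[ge|ge].
- by exists (Some (Ordinal ik, true)) => /=; lra.
- by exists (Some (Ordinal ik, false)) => /=; lra.
Qed.

End ClosedHull.

Section LipschitzFree.
Variables (R : realType) (M : Type) (d : M -> M -> R) (x0 : M).
Variable Y : normedModType R.
Hypothesis d_metric : is_metric d.
Variable f : M -> Y.
Hypothesis f_lip : Lip0 d x0 f.

Lemma dist_gt0 p q : p <> q -> 0 < d p q.
Proof.
have [d_ge0 [d_eq0 _]] := d_metric.
by move=> pq; rewrite lt_neqAle d_ge0 andbT; apply/eqP => /esym /d_eq0.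
Qed.

Let slopes := [set r | exists p q, p <> q /\ r = `|f p - f q| / d p q].

Let slopes_ub : has_ubound slopes.
Proof.
have [_ [C fC]] := f_lip.
by exists C => _ [p [q [pq ->]]]; rewrite ler_pdivrMr ?dist_gt0.
Qed.

Lemma slope_le_lipnorm p q : p <> q -> `|f p - f q| / d p q <= lipnorm d f.
Proof. by move=> pq; apply: ub_le_sup; [exact: slopes_ub | exists p, q]. Qed.

Lemma lipschitz_lipnorm p q : `|f p - f q| <= lipnorm d f * d p q.
Proof.
have [->|pq] := pselect (p = q).
  by have [_ [d_eq0 _]] := d_metric; rewrite subrr normr0 (d_eq0 q q).2 ?mulr0.
by have := slope_le_lipnorm pq; rewrite ler_pdivrMr ?dist_gt0.
Qed.

Lemma lipnorm_ge0 : (exists x, x <> x0) -> 0 <= lipnorm d f.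
Proof.
move=> [x xx0]; apply: le_trans (slope_le_lipnorm xx0).
by rewrite divr_ge0 // ltW // dist_gt0.
Qed.

Definition molecule p q : (M -> R) -> R := fun g => (g p - g q) / d p q.
Definition molecule_seq p q : seq (R * M) := [:: ((d p q)^-1, p); (- (d p q)^-1, q)].

Lemma mol_molecule_seq p q g : mol (molecule_seq p q) g = molecule p q g.
Proof. by rewrite /mol /molecule big_cons big_seq1 /=; ring. Qed.

Lemma molY_molecule_seq p q :
  molY f (molecule_seq p q) = (d p q)^-1 *: (f p - f q).
Proof. by rewrite /molY big_cons big_seq1 /= scaleNr scalerBr. Qed.

Lemma molecule_in_free p q : in_free d x0 (molecule p q).
Proof.
split; first by move=> a g h _ _; rewrite /molecule; ring.
move=> e e0; exists (molecule_seq p q) => g _.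
by rewrite mol_molecule_seq subrr normr0 ltW.
Qed.

Lemma molecule_free_ball p q : p <> q -> free_ball d x0 (molecule p q).
Proof.
move=> pq g [_ g1]; rewrite /molecule normrM normfV (gtr0_norm (dist_gt0 pq)).
by rewrite ler_pdivrMr ?dist_gt0 // mul1r.
Qed.

Lemma Tf_val_molecule p q :
  Tf_val d x0 f (molecule p q) ((d p q)^-1 *: (f p - f q)).
Proof.
exists (fun _ => molecule_seq p q); split.
  by move=> n g _; rewrite mol_molecule_seq subrr normr0 invr_ge0.
by rewrite molY_molecule_seq; exact: cvg_cst.
Qed.

(* [phi] is tested against [psi \o f / (c + e)], which lies in the unit ball
   of [Lip0(M, R)]. *)
Lemma Tf_val_le phi y psi c : free_ball d x0 phi -> Tf_val d x0 f phi y ->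
  bounded_linear psi -> 0 <= c -> (forall p q, psi (f p - f q) <= c * d p q) ->
  psi y <= c.
Proof.
move=> phi1 [s [s_phi sy]] psi_bl c0 psi_c; apply/ler_addgt0Pr => e e0.
have [d_ge0 [_ [d_sym _]]] := d_metric.
have ce0 : 0 < c + e by lra.
pose g x := psi (f x) / (c + e).
have g_ball : lip_ball d x0 g.
  split; first by rewrite /g f_lip.1 (linear_form0 psi_bl.1) mul0r.
  move=> p q; rewrite /g -mulrBl -(linear_formB psi_bl.1) normrM normfV.
  rewrite (gtr0_norm ce0) ler_pdivrMr //.
  have := psi_c q p; rewrite -opprB (linear_formN psi_bl.1) d_sym.
  have := psi_c p q; have := d_ge0 p q; rewrite ler_norml; nra.
have bound n : psi (molY f (s n)) <= (c + e) * (1 + n.+1%:R^-1).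
  have molE : mol (s n) g = psi (molY f (s n)) / (c + e).
    rewrite /mol /molY (linear_form_sum psi_bl.1) mulr_suml.
    by apply: eq_bigr => x _; rewrite (linear_formZ psi_bl.1) /g mulrA.
  rewrite mulrC -ler_pdivrMr //; have := s_phi n g g_ball; have := phi1 g g_ball.
  by rewrite molE; set t := n.+1%:R^-1; rewrite !ler_norml; lra.
have bound_cvg : (fun n => (c + e) * (1 + n.+1%:R^-1)) @ \oo --> (c + e) * (1 + 0).
  exact: cvgM (cvg_cst _) (cvgD (cvg_cst _) cvg_harmonic).
rewrite addr0 mulr1 in bound_cvg.
have psi_cvg : (fun n => psi (molY f (s n))) @ \oo --> psi y.
  exact: (bounded_linear_cvg psi_bl sy).
by apply: ler_cvg_to psi_cvg bound_cvg _; exact: filterE.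
Qed.

Hypothesis M_nontrivial : exists x, x <> x0.

Lemma Tf_val_norm_le phi y : free_ball d x0 phi -> Tf_val d x0 f phi y ->
  `|y| <= lipnorm d f.
Proof.
move=> phi1 phi_y; have [ys [ys_bl ys_le <-]] := norming_functional y.
apply: Tf_val_le phi1 phi_y ys_bl (lipnorm_ge0 M_nontrivial) _ => p q.
exact: le_trans (ys_le _) (lipschitz_lipnorm p q).
Qed.

Lemma Tf_norm_lipnorm : Tf_norm d x0 f = lipnorm d f.
Proof.
rewrite /Tf_norm; set T := (X in sup X).
have T_molecule p q : p <> q -> T `|(d p q)^-1 *: (f p - f q)|.
  move=> pq; exists (molecule p q), ((d p q)^-1 *: (f p - f q)).
  split; first exact: molecule_in_free.
  by split; [exact: molecule_free_ball | split; [exact: Tf_val_molecule |]].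
have T_ub : ubound T (lipnorm d f).
  by move=> _ [phi [y [_ [phi1 [phi_y ->]]]]]; exact: (Tf_val_norm_le phi1 phi_y).
have [x xx0] := M_nontrivial.
apply/eqP; rewrite eq_le; apply/andP; split.
  by apply: (ge_sup _ T_ub); exists `|(d x x0)^-1 *: (f x - f x0)|; exact: T_molecule.
apply: ge_sup; first by exists (`|f x - f x0| / d x x0), x, x0.
move=> _ [p [q [pq ->]]]; apply: ub_le_sup; first by exists (lipnorm d f).
by move: (T_molecule p q pq); rewrite normrZ normfV (gtr0_norm (dist_gt0 pq)) mulrC.
Qed.

End LipschitzFree.

Section NormAttainment.
Variables (R : realType) (M : Type) (d : M -> M -> R) (x0 : M).
Variable Y : completeNormedModType R.
Hypothesis d_metric : is_metric d.
Hypothesis M_nontrivial : exists x, x <> x0.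
Variable f : M -> Y.
Hypothesis f_lip : Lip0 d x0 f.

Lemma Tf_QNA_of_in_A : in_A d f -> Tf_QNA d x0 f.
Proof.
move=> [y [p [q [pq [pq_y ny]]]]].
exists (fun n => molecule d (p n) (q n)),
  (fun n => (d (p n) (q n))^-1 *: (f (p n) - f (q n))), y.
split; last by rewrite Tf_norm_lipnorm.
move=> n; split; first exact: molecule_in_free.
by split; [exact: molecule_free_ball | exact: Tf_val_molecule].
Qed.

Lemma in_A_of_lipnorm0 : lipnorm d f = 0 -> in_A d f.
Proof.
move=> L0; have [x xx0] := M_nontrivial.
have fx : f x - f x0 = 0.
  apply: normr0_eq0; apply/eqP; rewrite eq_le normr_ge0 andbT.
  by have := lipschitz_lipnorm d_metric f_lip x x0; rewrite L0 mul0r.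
exists 0, (fun _ => x), (fun _ => x0); split => //; split; last by rewrite normr0 L0.
by rewrite fx scaler0; exact: cvg_cst.
Qed.

Let L := lipnorm d f.

Definition unit_slopes : set Y :=
  [set s | exists p q, p <> q /\ s = (L * d p q)^-1 *: (f p - f q)].

Hypothesis L_gt0 : 0 < L.

Lemma unit_slopes_le1 s : unit_slopes s -> `|s| <= 1.
Proof.
move=> [p [q [pq ->]]]; have dpq := dist_gt0 d_metric pq.
rewrite normrZ normfV gtr0_norm ?mulr_gt0 // mulrC ler_pdivrMr ?mulr_gt0 //.
by rewrite mul1r /L; exact: (lipschitz_lipnorm d_metric f_lip p q).
Qed.

Lemma Tf_limit_in_slope_hull (phi : nat -> (M -> R) -> R) (yn : nat -> Y) (y0 : Y) :
  (forall n, free_ball d x0 (phi n) /\ Tf_val d x0 f (phi n) (yn n)) ->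
  yn @ \oo --> y0 -> forall psi, bounded_linear psi ->
  (forall s, unit_slopes s -> psi s <= 1) -> psi (L^-1 *: y0) <= 1.
Proof.
move=> phi_yn yn_y0 psi psi_bl psi_le1.
have psi_f p q : psi (f p - f q) <= L * d p q.
  have [->|pq] := pselect (p = q).
    have [d_ge0 _] := d_metric.
    by rewrite subrr (linear_form0 psi_bl.1) mulr_ge0 // ltW.
  have dpq := dist_gt0 d_metric pq.
  have := psi_le1 _ (ex_intro _ p (ex_intro _ q (conj pq erefl))).
  by rewrite (linear_formZ psi_bl.1) mulrC ler_pdivrMr ?mulr_gt0 // mul1r.
have psi_yn n : psi (yn n) <= L.
  have [phi1 phi_y] := phi_yn n.
  exact: (Tf_val_le d_metric f_lip phi1 phi_y psi_bl (ltW L_gt0) psi_f).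
have psi_y0 : psi y0 <= L.
  have psi_cvg : (fun n => psi (yn n)) @ \oo --> psi y0.
    exact: (bounded_linear_cvg psi_bl yn_y0).
  by apply: ler_cvg_to psi_cvg (cvg_cst L) _; exact: filterE.
by rewrite (linear_formZ psi_bl.1) mulrC ler_pdivrMr // mul1r.
Qed.

Lemma in_A_of_Tf_limit (phi : nat -> (M -> R) -> R) (yn : nat -> Y) (y0 : Y) :
  strictly_convex Y -> kadec_klee Y ->
  (forall n, free_ball d x0 (phi n) /\ Tf_val d x0 f (phi n) (yn n)) ->
  yn @ \oo --> y0 -> `|y0| = L -> in_A d f.
Proof.
move=> SC KK phi_yn yn_y0 ny0.
have L0 : L != 0 by rewrite gt_eqF.
have yh1 : `|L^-1 *: y0| = 1 by rewrite normrZ normfV gtr0_norm // ny0 mulVf.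
have close n : exists pq : M * M, pq.1 <> pq.2 /\
    `|y0 - (d pq.1 pq.2)^-1 *: (f pq.1 - f pq.2)| < n.+1%:R^-1.
  have e0 : 0 < (L * n.+1%:R)^-1 by rewrite invr_gt0 mulr_gt0.
  have [_ [[p [q [pq ->]]] s_close]] := sphere_hull_in_closure SC KK
    unit_slopes_le1 yh1 (Tf_limit_in_slope_hull phi_yn yn_y0) e0.
  exists (p, q); split => //=.
  have -> : y0 - (d p q)^-1 *: (f p - f q) =
      L *: (L^-1 *: y0 - (L * d p q)^-1 *: (f p - f q)).
    by rewrite [X in _ = X]scalerBr !scalerA mulfV // scale1r invfM mulrA mulfV // mul1r.
  rewrite normrZ gtr0_norm // distrC.
  rewrite [X in _ < X](_ : _ = L * (L * n.+1%:R)^-1); last first.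
    by rewrite invfM mulrA mulfV // mul1r.
  by rewrite ltr_pM2l.
have [pq pqP] := choice close.
exists y0, (fun n => (pq n).1), (fun n => (pq n).2); split; first by move=> n; case: (pqP n).
by split => //; apply: cvg_harmonic_dist => n; case: (pqP n).
Qed.

End NormAttainment.

Theorem corollary2p5 (R : realType) (M : Type) (d : M -> M -> R) (x0 : M)
    (Y : completeNormedModType R) :
  is_metric d -> complete_metric d ->
  (exists x : M, x <> x0) ->
  strictly_convex Y -> kadec_klee Y ->
  forall f : M -> Y, Lip0 d x0 f ->
    (in_A d f <-> Tf_QNA d x0 f).
Proof.
move=> d_metric _ M_nontrivial SC KK f f_lip; split; first exact: Tf_QNA_of_in_A.
move=> [phi [yn [y0 [phi_yn [yn_y0]]]]]; rewrite Tf_norm_lipnorm // => ny0.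
have := lipnorm_ge0 d_metric f_lip M_nontrivial.
rewrite le_eqVlt => /orP[/eqP/esym L0|L_gt0].
  exact: (in_A_of_lipnorm0 d_metric M_nontrivial f_lip L0).
exact: (in_A_of_Tf_limit d_metric f_lip L_gt0 SC KK (fun n => (phi_yn n).2) yn_y0 ny0).
Qed.
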